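(* Let $p$ be an odd prime, $r,m$ positive integers and $s\in\{0,1,\dots,mp^{r-1}-1\}$. Then $$\binom{mp^r}{sp}\equiv\binom{mp^{r-1}}{s}\pmod{p^{2r}}.$$ *)

From mathcomp Require Import all_boot.

From mathcomp Require Import all_boot zify.

Set Implicit Arguments.
Unset Strict Implicit.

(* Let N = m p^(r-1) and k = s p.  Removing the multiples of p from the falling
   factorials (N p)^_k and k^_k = k! leaves p^s N^_s and p^s s!, so
   C(N p, k) W(k) = C(N, s) W(N p), where W(X) is the product of the X - i
   with i < k prime to p.  Pairing i with k - i (never equal, as p is odd)
   gives (X - i)(X - k + i) = (X - k) X + i (k - i), hence
   W(N p) = W(k) modulo (N p - k) N p = p^2 N (N - s).  Since
   C(N, s) (N - s) N is divisible by N^2 = m^2 p^(2r - 2), the two binomials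
   agree modulo p^(2r) after cancelling W(k), which is prime to p. *)

Section MultiplesOfp.

Variables (R : Type) (idx : R) (op : Monoid.law idx).

Lemma big_nat_multiples p s (F : nat -> R) : 0 < p ->
  \big[op/idx]_(0 <= i < s * p | p %| i) F i = \big[op/idx]_(0 <= j < s) F (j * p).
Proof.
move=> p_gt0; elim: s => [|s IHs]; first by rewrite mul0n !big_geq.
rewrite mulSnr (big_cat_nat (leq0n _) (leq_addr _ _)) IHs big_nat_recr //=.
have p_sp : p %| s * p by exact: dvdn_mull.
have lt_sp : s * p < s * p + p by rewrite -addn1 leq_add2l.
congr (op _ _); rewrite big_ltn_cond // p_sp.
rewrite big_nat_cond big1 ?Monoid.mulm1 // => i /andP[/andP[lt_si lt_ip] p_i].
exfalso; move: p_i; rewrite -(subnKC (ltnW lt_si)) dvdn_addr //.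
by move/dvdn_leq; lia.
Qed.

End MultiplesOfp.

Lemma prod_congr_modn I (r : seq I) (P : pred I) (F G : I -> nat) d :
  (forall i, P i -> F i = G i %[mod d]) ->
  \prod_(i <- r | P i) F i = \prod_(i <- r | P i) G i %[mod d].
Proof.
move=> eqFG; apply: (big_ind2 (fun x y => x = y %[mod d])) => // x1 x2 y1 y2.
by move=> e1 e2; rewrite -modnMm e1 e2 modnMm.
Qed.

Lemma eqn_modMr_coprime a b w d :
  coprime w d -> (a * w == b * w %[mod d]) = (a == b %[mod d]).
Proof.
move=> cwd; apply/idP/idP => [|/eqP e]; last by rewrite -modnMml e modnMml.
wlog le_ba : a b / b <= a => [hwlog|].
  case: (leqP b a) => [/hwlog//|/ltnW le_ab e].
  by rewrite eq_sym hwlog // eq_sym.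
rewrite !eqn_mod_dvd ?leq_mul2r ?le_ba ?orbT // -mulnBl Gauss_dvdl //.
by rewrite coprime_sym.
Qed.

Lemma mul_subn_sym X k i : i <= k -> k <= X ->
  (X - i) * (X - (k - i)) = (X - k) * X + i * (k - i).
Proof.
move=> /subnKC <- /subnK <-; move: (k - i) (X - _) => j a.
rewrite addKn addnK (addnCA a) addKn addnA addnK; nia.
Qed.

Lemma sqrn_dvd_bin_mul n s : n ^ 2 %| 'C(n, s) * ((n - s) * n).
Proof. by rewrite mulnA (mulnC 'C(n, s)) -mul_bin_down mulnAC dvdn_mulr. Qed.

Definition ffact_skipmul p X k := \prod_(0 <= i < k | ~~ (p %| i)) (X - i).

Lemma ffact_mul_split p Y s : 0 < p ->
  (Y * p) ^_ (s * p) = p ^ s * Y ^_ s * ffact_skipmul p (Y * p) (s * p).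
Proof.
move=> p_gt0; rewrite ffact_prod -(big_mkord xpredT) (bigID (dvdn p)) /=.
rewrite big_nat_multiples //; congr (_ * _).
under eq_bigr do rewrite -mulnBl mulnC.
by rewrite big_split /= prod_nat_const_nat subn0 ffact_prod big_mkord.
Qed.

Lemma bin_mul_ffact_skipmul p Y s : 0 < p ->
  'C(Y * p, s * p) * ffact_skipmul p (s * p) (s * p) =
  'C(Y, s) * ffact_skipmul p (Y * p) (s * p).
Proof.
move=> p_gt0; have := bin_ffact (Y * p) (s * p).
rewrite -ffactnn !ffact_mul_split // ffactnn -bin_ffact => eqC.
apply/eqP; rewrite -(@eqn_pmul2l (p ^ s * s`!)); last first.
  by rewrite muln_gt0 expn_gt0 p_gt0 fact_gt0.
apply/eqP; rewrite mulnCA eqC; nia.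
Qed.

Lemma ffact_skipmul_pair p X k : odd p -> p %| k -> k <= X ->
  ffact_skipmul p X k =
  \prod_(0 <= i < k | ~~ (p %| i) && (2 * i < k)) ((X - k) * X + i * (k - i)).
Proof.
move=> odd_p p_k le_kX; rewrite /ffact_skipmul.
have [->|k_gt0] := posnP k; first by rewrite !big_geq.
rewrite big_ltn_cond // [RHS]big_ltn_cond // dvdn0 /= (bigID (fun i => 2 * i < k)) /=.
have reflect_half : \prod_(1 <= i < k | ~~ (p %| i) && ~~ (2 * i < k)) (X - i) =
                    \prod_(1 <= i < k | ~~ (p %| i) && (2 * i < k)) (X - (k - i)).
  rewrite big_nat_rev big_nat_cond [RHS]big_nat_cond.
  apply: congr_big => // i; case: (boolP (1 <= i < k)) => //= /andP[_ lt_ik].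
  have -> : 1 + k - i.+1 = k - i by lia.
  rewrite dvdn_subr ?(ltnW lt_ik) //; case p_i: (p %| i) => //=.
  (* [2 i = k] would force [p %| i] since [p] is odd *)
  have neq_2ik : 2 * i != k.
    by apply: contraFneq p_i => e2ik; move: p_k; rewrite -e2ik Gauss_dvdr ?coprimen2.
  by rewrite -leqNgt; apply/idP/idP; lia.
rewrite reflect_half -big_split /= big_nat_cond [RHS]big_nat_cond.
by apply: eq_bigr => i /andP[/andP[_ /ltnW le_ik] _]; rewrite mul_subn_sym.
Qed.

Lemma ffact_skipmul_mod p X k : odd p -> p %| k -> k <= X ->
  ffact_skipmul p X k = ffact_skipmul p k k %[mod (X - k) * X].
Proof.
move=> odd_p p_k le_kX; rewrite !ffact_skipmul_pair // subnn mul0n.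
by apply: prod_congr_modn => i _; rewrite modnDl.
Qed.

Lemma coprime_ffact_skipmul p k : prime p -> p %| k ->
  coprime (ffact_skipmul p k k) p.
Proof.
move=> p_pr p_k; rewrite /ffact_skipmul big_nat_cond.
elim/big_ind: _ => [|x y|i /andP[/andP[_ lt_ik] p'i]]; first exact: coprime1n.
  by rewrite coprimeMl => -> ->.
by rewrite coprime_sym prime_coprime // dvdn_subr ?(ltnW lt_ik).
Qed.

Theorem lemma2p10 (p r m s : nat) :
  prime p -> odd p -> 0 < r -> 0 < m -> s < m * p ^ r.-1 ->
  'C(m * p ^ r, s * p) = 'C(m * p ^ r.-1, s) %[mod p ^ (2 * r)].
Proof.
move=> p_pr odd_p r_gt0 _; set N := m * p ^ r.-1.
have p_gt0 := prime_gt0 p_pr.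
have eqNp : m * p ^ r = N * p by rewrite /N -mulnA -expnSr prednK.
rewrite eqNp => lt_sN.
have p_sp : p %| s * p by exact: dvdn_mull.
have le_spNp : s * p <= N * p by rewrite leq_mul2r (ltnW lt_sN) orbT.
have dvd_mod : p ^ (2 * r) %| 'C(N, s) * ((N * p - s * p) * (N * p)).
  have dvd_Np2 : p ^ (2 * r) %| (N * p) ^ 2.
    by rewrite -eqNp expnMn mulnC expnM dvdn_mull.
  apply: dvdn_trans dvd_Np2 _; rewrite -mulnBl mulnACA mulnA expnMn.
  exact/dvdn_mul/dvdnn/sqrn_dvd_bin_mul.
have coprime_W := coprimeXr (2 * r) (coprime_ffact_skipmul p_pr p_sp).
have eq_mod : 'C(N, s) * ffact_skipmul p (N * p) (s * p) =
              'C(N, s) * ffact_skipmul p (s * p) (s * p)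
              %[mod 'C(N, s) * ((N * p - s * p) * (N * p))].
  by rewrite -!muln_modr ffact_skipmul_mod.
apply/eqP; rewrite -(eqn_modMr_coprime _ _ coprime_W) bin_mul_ffact_skipmul //.
by apply/eqP; rewrite -(modn_dvdm _ dvd_mod) eq_mod modn_dvdm.
Qed.
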